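(* Let $F\subseteq\mathcal{U}$ be the set of elements revealed in the first stage, and suppose the Simple algorithm with input a set $J\subset\mathbb{Z}$ is run on the elements of $\mathcal{U}\setminus F$ as they are revealed. Then it returns an independent set $P\subseteq\mathcal{U}\setminus F$ such that $$\mathrm{OPT}(P)\ \ge\ \sum_{j\in J}2^j\cdot\Big(\mathrm{rank}\big(B_{\mathcal{U}\setminus F}(J\setminus\{j\})\cup B_{\mathcal{U}\setminus F}(j)\big)-\mathrm{rank}\big(B_{\mathcal{U}\setminus F}(J\setminus\{j\})\big)\Big).$$
   Context: $M=(\mathcal{U},\mathcal{I})$ is a matroid with $n=|\mathcal{U}|$; $\mathrm{rank}(X)=\max\{|X'|:X'\subseteq X,X'\in\mathcal{I}\}$, $\mathrm{span}(X)=\{e:\mathrm{rank}(X\cup\{e\})=\mathrm{rank}(X)\}$, and $\mathrm{OPT}(X)=\max\{\sum_{e\in X'}\mathrm{val}(e):X'\subseteq X,X'\in\mathcal{I}\}$. Standing assumption: elements of rank $0$ have value $0$, and every element of positive value has value $2^i$ for some $i\in\mathbb{Z}$. For $X\subseteq\mathcal{U}$, $B_X(i)=\{e\in X:\mathrm{val}(e)=2^i\}$, $B_X(I)=\bigcup_{i\in I}B_X(i)$. Logarithms base 2. Setting: the elements of $\mathcal{U}$ are revealed one by one in uniformly random order; $W$ is the number of successes in $n$ independent fair Bernoulli trials, and $F$ is the set of the first $W$ revealed elements (none of which is selected); afterwards the elements of $\mathcal{U}\setminus F$ are revealed one by one. Simple algorithm with input $J$: start with $P=\emptyset$; immediately after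 each element $e\in\mathcal{U}\setminus F$ is revealed, if $\mathrm{val}(e)>0$, $\log\mathrm{val}(e)\in J$ and $e\notin\mathrm{span}(P)$, add $e$ to $P$. Output $P$. *)

From mathcomp Require Import all_boot all_order all_algebra.
From mathcomp Require Import boolp.
Set Implicit Arguments. Unset Strict Implicit. Unset Printing Implicit Defensive.
Import Order.TTheory GRing.Theory Num.Theory.
Local Open Scope ring_scope.

Section Matroid.
Variable T : finType.

Definition is_matroid (I : pred {set T}) : Prop :=
  [/\ I set0,
      (forall A B : {set T}, B \subset A -> I A -> I B) &
      (forall A B : {set T}, I A -> I B -> #|A| < #|B| ->
          exists2 e, e \in B :\: A & I (e |: A))]%N.

Variable I : pred {set T}.

Definition mrank (X : {set T}) : nat :=
  \max_(Y : {set T} | (Y \subset X) && I Y) #|Y|.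

Definition mspan (X : {set T}) : {set T} :=
  [set e | mrank (e |: X) == mrank X].

Variable R : realFieldType.
Variable val : T -> R.

Definition OPT (X : {set T}) : R :=
  \big[Num.max/0]_(Y : {set T} | (Y \subset X) && I Y) \sum_(e in Y) val e.

Definition Bcl (X : {set T}) (i : int) : {set T} :=
  [set e in X | val e == (2 : R) ^ i].

Definition BclJ (X : {set T}) (J : pred int) : {set T} :=
  [set e in X | `[< exists2 i, J i & val e = (2 : R) ^ i >]].

Definition inJ (J : pred int) (e : T) : bool :=
  (0 < val e) && `[< exists2 i, J i & val e = (2 : R) ^ i >].

Definition simple_step (J : pred int) (P : {set T}) (e : T) : {set T} :=
  if inJ J e && (e \notin mspan P) then e |: P else P.

(* The Simple algorithm with input J run on the revealed sequence s
   (the elements of U \ F in order of revelation), starting from P = empty. *)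
Definition simple_alg (J : pred int) (s : seq T) : {set T} :=
  foldl (simple_step J) set0 s.

End Matroid.

From mathcomp Require Import all_boot all_order all_algebra.
From mathcomp Require Import boolp.
Set Implicit Arguments. Unset Strict Implicit. Unset Printing Implicit Defensive.
Import Order.TTheory GRing.Theory Num.Theory.
Local Open Scope ring_scope.

(* The Simple algorithm is the greedy algorithm on the elements of
   B_{U\F}(J), so it returns a basis P of B_{U\F}(J).  For j in J the elements
   of P whose value is not 2^j form an independent subset of B_{U\F}(J\{j}),
   hence P has at least rank(B(J\{j}) u B(j)) - rank(B(J\{j})) elements of
   value 2^j.  Weighting these counts by 2^j and summing over j bounds the
   total value of P, which is at most OPT(P) since P is independent. *)

Section MatroidBasis.
Variables (T : finType) (I : pred {set T}).
Hypothesis matroidI : is_matroid I.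

Lemma card_le_mrank (X Y : {set T}) :
  Y \subset X -> I Y -> (#|Y| <= mrank I X)%N.
Proof. by move=> sYX iY; apply: leq_bigmax_cond; rewrite sYX. Qed.

Lemma mrank_le (X : {set T}) (n : nat) :
  (forall Y : {set T}, Y \subset X -> I Y -> (#|Y| <= n)%N) ->
  (mrank I X <= n)%N.
Proof. by move=> le_n; apply/bigmax_leqP => Y /andP[]; apply: le_n. Qed.

Lemma mrank_indep (P : {set T}) : I P -> mrank I P = #|P|.
Proof.
move=> iP; apply/eqP; rewrite eqn_leq card_le_mrank // andbT.
by apply: mrank_le => Y /subset_leq_card.
Qed.

Lemma indep_subset (A B : {set T}) : B \subset A -> I A -> I B.
Proof. by case: matroidI => _ + _; apply. Qed.

Lemma mspan_indepE (P : {set T}) (e : T) :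
  I P -> (e \in mspan I P) = (e \in P) || ~~ I (e |: P).
Proof.
move=> iP; rewrite inE [mrank I P]mrank_indep //.
have [eP | eNP] /= := boolP (e \in P).
  by rewrite (setUidPr _) ?sub1set // mrank_indep ?eqxx.
have [ieP | ieNP] /= := boolP (I (e |: P)).
  by rewrite mrank_indep // cardsU1 eNP eqn_leq ltnn.
apply/eqP/anti_leq; rewrite card_le_mrank ?subsetUr // andbT.
apply: mrank_le => Y sYeP iY.
have ltY : Y \proper e |: P.
  by rewrite properEneq sYeP andbT; apply: contraTneq iY => ->.
by have := proper_card ltY; rewrite cardsU1 eNP.
Qed.

Definition basis_of (D P : {set T}) : Prop :=
  [/\ I P, P \subset D & {in D, forall e, (e \in P) || ~~ I (e |: P)}].

Lemma mrank_le_basis (D P X : {set T}) :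
  basis_of D P -> X \subset D -> (mrank I X <= #|P|)%N.
Proof.
case=> iP _ maxP sXD; apply: mrank_le => Y sYX iY.
rewrite leqNgt; apply/negP => ltPY.
case: matroidI => _ _ /(_ P Y iP iY ltPY) [e /setDP[eY eNP] iPe].
by have := maxP e (subsetP sXD e (subsetP sYX e eY)); rewrite (negbTE eNP) iPe.
Qed.

End MatroidBasis.

Section SimpleAlgorithm.
Variables (T : finType) (I : pred {set T}).
Hypothesis matroidI : is_matroid I.
Variables (R : realFieldType) (val : T -> R) (J : pred int).

Lemma inJE (e : T) :
  inJ val J e = `[< exists2 i, J i & val e = (2 : R) ^ i >].
Proof.
rewrite /inJ; case: asboolP => [[i _ ->] | _]; last by rewrite andbF.
by rewrite exprz_gt0.
Qed.

Lemma in_BclJ (X : {set T}) (e : T) :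
  (e \in BclJ val X J) = (e \in X) && inJ val J e.
Proof. by rewrite inE inJE. Qed.

Lemma basis_simple_step (D P : {set T}) (x : T) :
  basis_of I (BclJ val D J) P ->
  basis_of I (BclJ val (x |: D) J) (simple_step I val J P x).
Proof.
case=> iP sPD maxP; rewrite /simple_step mspan_indepE //.
have sDxD : BclJ val D J \subset BclJ val (x |: D) J.
  by apply/subsetP => y; rewrite !in_BclJ in_setU1 => /andP[-> ->]; rewrite orbT.
case: ifP => [/andP[Jx] | NxP].
  rewrite negb_or negbK => /andP[xNP iPx]; split=> //.
    by rewrite subUset sub1set in_BclJ setU11 Jx (subset_trans sPD).
  move=> e; rewrite in_BclJ in_setU1 => /andP[/predU1P[-> | eD] Je].
    by rewrite setU11.
  have /orP[eP | NiPe] : (e \in P) || ~~ I (e |: P).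
    by apply: maxP; rewrite in_BclJ eD.
    by rewrite in_setU1 eP orbT.
  apply/orP; right; apply: contra NiPe; apply: (indep_subset matroidI).
  by rewrite setUCA subsetUr.
split=> //; first exact: subset_trans sPD sDxD.
move=> e; rewrite in_BclJ in_setU1 => /andP[/predU1P[-> | eD] Je].
  by move: NxP; rewrite Je /= => /negbFE.
by apply: maxP; rewrite in_BclJ eD.
Qed.

Lemma basis_simple_alg (s : seq T) :
  basis_of I (BclJ val [set x in s] J) (simple_alg I val J s).
Proof.
suff basis_foldl D P : basis_of I (BclJ val D J) P ->
    basis_of I (BclJ val (D :|: [set x in s]) J)
               (foldl (simple_step I val J) P s).
  rewrite -[[set x in s]]set0U; apply: basis_foldl.
  by split; [case: matroidI | rewrite sub0set | move=> e; rewrite in_BclJ inE].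
elim: s D P => [|x s IHs] D P baseP /=.
  by rewrite (_ : [set x in [::]] = set0) ?setU0.
rewrite (_ : D :|: _ = (x |: D) :|: [set y in s]).
  exact/IHs/basis_simple_step.
by apply/setP => y; rewrite !inE -orbA orbCA.
Qed.

Lemma BclJ_predD1 (X : {set T}) (j : int) :
  J j -> BclJ val X (predD1 J j) :|: Bcl val X j = BclJ val X J.
Proof.
move=> Jj; apply/setP => e; rewrite !inE -andb_orr; congr (_ && _).
apply/orP/asboolP => [[/asboolP[i /andP[_ Ji] ->] | /eqP ->] | [i Ji ->]].
- by exists i.
- by exists j.
have [-> | nij] := eqVneq i j; first by right.
by left; apply/asboolP; exists i; rewrite /= ?nij.
Qed.

Lemma mrank_gap_le (D P : {set T}) (j : int) :
  basis_of I (BclJ val D J) P -> J j ->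
  (mrank I (BclJ val D (predD1 J j) :|: Bcl val D j)
     <= #|Bcl val P j| + mrank I (BclJ val D (predD1 J j)))%N.
Proof.
move=> baseP Jj; have [iP sPD _] := baseP.
apply: leq_trans (mrank_le_basis matroidI baseP _) _.
  by rewrite BclJ_predD1.
have sBP : Bcl val P j \subset P by apply/subsetP => e; rewrite inE => /andP[].
rewrite -(cardsID (Bcl val P j)) (setIidPr sBP) leq_add2l.
apply: card_le_mrank; last exact: (indep_subset matroidI (subsetDl P _) iP).
apply/subsetP => e /setDP[eP eNB].
move: (subsetP sPD e eP); rewrite -(BclJ_predD1 _ Jj) in_setU => /orP[// | eB].
by move: eNB; rewrite !inE eP; move: eB; rewrite inE => /andP[_ ->].
Qed.

End SimpleAlgorithm.

Section Weights.
Variables (T : finType) (R : realFieldType) (val : T -> R).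

Lemma sum_Bcl_le (X : {set T}) (Js : seq int) :
  uniq Js -> {in X, forall e, 0 <= val e} ->
  \sum_(j <- Js) (2 : R) ^ j * #|Bcl val X j|%:R <= \sum_(e in X) val e.
Proof.
move=> uJs val_ge0.
have classE j : (2 : R) ^ j * #|Bcl val X j|%:R =
                \sum_(e in X | val e == (2 : R) ^ j) val e.
  rewrite mulr_natr -sumr_const (eq_bigr val) => [|e].
    by apply: eq_bigl => e; rewrite inE.
  by rewrite inE => /andP[_ /eqP].
rewrite (eq_bigr _ (fun j _ => classE j)) /=.
under eq_bigr do rewrite big_mkcondr /=.
rewrite exchange_big /=; apply: ler_sum => e Xe.
have [/hasP[j0 j0Js /eqP ej0] | noJ] :=
  boolP (has (fun j => val e == (2 : R) ^ j) Js).
  rewrite (bigD1_seq j0) //= ej0 eqxx big1 ?addr0 // => j nj0.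
  case: eqP => // ej; case/negP: nj0; apply/eqP.
  by apply: (ieexprIz (x := 2 : R)); rewrite ?ltr0n ?pnatr_eq1 // -ej.
rewrite big1_seq ?val_ge0 // => j /andP[_ jJs].
by case: eqP => // ej; case/hasP: noJ; exists j => //; apply/eqP.
Qed.

Lemma sum_le_OPT (I : pred {set T}) (X : {set T}) :
  I X -> \sum_(e in X) val e <= OPT I val X.
Proof. by move=> iX; apply: le_bigmax_cond; rewrite subxx. Qed.

End Weights.

Theorem theorem1 (T : finType) (I : pred {set T}) (R : realFieldType)
  (val : T -> R)
  (HM : is_matroid I)
  (Hrank0 : forall e : T, mrank I [set e] = 0%N -> val e = 0)
  (Hpow : forall e : T, 0 < val e -> exists i : int, val e = (2 : R) ^ i)
  (F : {set T}) (s : seq T) (Hs : perm_eq s (enum (~: F)))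
  (J : pred int) :
  let P := simple_alg I val J s in
  [/\ I P, P \subset ~: F &
      forall Js : seq int, uniq Js -> all J Js ->
        \sum_(j <- Js)
           (2 : R) ^ j *
           ((mrank I (BclJ val (~: F) (predD1 J j) :|: Bcl val (~: F) j))%:R
            - (mrank I (BclJ val (~: F) (predD1 J j)))%:R)
        <= OPT I val P].
Proof.
move=> P.
have revealed : [set x in s] = ~: F.
  by apply/setP => y; rewrite inE (perm_mem Hs) mem_enum.
have baseP : basis_of I (BclJ val (~: F) J) P.
  by rewrite -revealed; exact: basis_simple_alg.
have [iP sPB _] := baseP.
split=> // [|Js uJs /allP JsJ].
  by apply/subsetP => e /(subsetP sPB); rewrite inE => /andP[].
apply: le_trans (sum_le_OPT val iP).
apply: le_trans (sum_Bcl_le uJs _); last first.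
  move=> e /(subsetP sPB); rewrite inE => /andP[_ /asboolP[i _ ->]].
  exact: exprz_ge0.
rewrite !big_seq; apply: ler_sum => j /JsJ Jj.
rewrite ler_wpM2l ?exprz_ge0 // lerBlDr -natrD ler_nat.
exact: (mrank_gap_le HM baseP Jj).
Qed.
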